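(* Let $X$ be a $T_0$ space. If $GSI_2$-convergence in $X$ is topological, then $X$ is strongly $QI_2$-continuous.
   Context: For a $T_0$ space $X$, the specialization order is $x\le y$ iff $x\in \mathrm{cl}\{y\}$; $\uparrow A=\{x: a\le x\text{ for some } a\in A\}$, $\uparrow x=\uparrow\{x\}$; $A^\uparrow$, $A^\downarrow$ are the sets of upper and lower bounds of $A$, and $A^\delta=(A^\uparrow)^\downarrow$. A nonempty subset $A$ of a space is irreducible if whenever $A\subseteq F_1\cup F_2$ with $F_1,F_2$ closed, $A\subseteq F_1$ or $A\subseteq F_2$. $X^{(<\omega)}$ is the set of nonempty finite subsets of $X$. $P_S(X)$ is the set of nonempty compact saturated (upper) subsets of $X$ with the upper Vietoris topology, basis $\{\square U: U\text{ open}\}$, $\square U=\{Q: Q\subseteq U\}$. A net is eventually in $U$ if from some index on all its terms lie in $U$; it converges to $x$ in a topology if it is eventually in every open set containing $x$. $U\subseteq X$ is $SI_2$-open if $U$ is open and for every irreducible $F\subseteq X$, $F^\delta\cap U\ne\emptyset$ implies $F\cap U\neq\emptyset$. A net $(x_i)_{i\in I}$ $GSI_2$-converges to $x$ if there exists $\mathcal F\subseteq X^{(<\omega)}$ with $\{\uparrow G: G\in\mathcal F\}$ irreducible in $P_S(X)$ such that (i) for every open $U$, if $\uparrow G\subseteq U$ for some $G\in\mathcal F$ then $x_i\in U$ eventually, and (ii) $\bigcap_{G\in\mathcal F}\uparrow G\subseteq\uparrow x$. Let $\mathcal{O}(\mathcal{GSI}_2(X))$ be the topology of all $U\subseteq X$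 such that every net $GSI_2$-converging to a point of $U$ is eventually in $U$. $GSI_2$-convergence in $X$ is topological if for every net and point, the net $GSI_2$-converges to the point iff it converges to it in the topology $\mathcal{O}(\mathcal{GSI}_2(X))$. For $A\subseteq X$, $x\in X$, $A\ll_{I_2}x$ means: for every irreducible $D\subseteq X$ with $x\in D^\delta$, $A\cap\mathrm{cl}D\ne\emptyset$. For $x\in X$, $w(x)=\{\uparrow F: F\in X^{(<\omega)}, F\ll_{I_2}x\}$. $X$ is $QI_2$-continuous if for every $x\in X$, $w(x)$ is irreducible in $P_S(X)$ and $\uparrow x=\bigcap w(x)$. $X$ is strongly $QI_2$-continuous if it is $QI_2$-continuous and for every $F\in X^{(<\omega)}$, $x\in X$ with $F\ll_{I_2}x$, and every open $U$ with $F\subseteq U$, there is an $SI_2$-open set $W$ with $x\in W\subseteq U$. *)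

From HB Require Import structures.
From mathcomp Require Import all_boot all_order.
From mathcomp Require Import boolp classical_sets functions cardinality topology.
Set Implicit Arguments. Unset Strict Implicit. Unset Printing Implicit Defensive.
Local Open Scope classical_set_scope.

Section Defs.
Variable X : topologicalType.

Definition spec_le (x y : X) : Prop := closure [set y] x.

Definition up (A : set X) : set X := [set x | exists2 a, A a & spec_le a x].
Definition upper_bounds (A : set X) : set X := [set y | forall a, A a -> spec_le a y].
Definition lower_bounds (A : set X) : set X := [set y | forall a, A a -> spec_le y a].
Definition delta (A : set X) : set X := lower_bounds (upper_bounds A).

Definition irreducible (A : set X) : Prop :=
  A !=set0 /\ forall F1 F2 : set X, closed F1 -> closed F2 ->
    A `<=` F1 `|` F2 -> A `<=` F1 \/ A `<=` F2.

Definition finsub (G : set X) : Prop := finite_set G /\ G !=set0.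

Definition saturated (Q : set X) : Prop := up Q `<=` Q.
Definition PS : set (set X) := [set Q | Q !=set0 /\ compact Q /\ saturated Q].
Definition box (U : set X) : set (set X) := [set Q | PS Q /\ Q `<=` U].
(* upper Vietoris topology on PS: unions of basic opens box U, U open *)
Definition PS_open (W : set (set X)) : Prop :=
  W `<=` PS /\ forall Q, W Q -> exists U : set X, [/\ open U, box U Q & box U `<=` W].
Definition PS_closed (C : set (set X)) : Prop :=
  exists W, PS_open W /\ C = PS `\` W.
Definition PS_irreducible (A : set (set X)) : Prop :=
  A `<=` PS /\ A !=set0 /\ forall C1 C2, PS_closed C1 -> PS_closed C2 ->
    A `<=` C1 `|` C2 -> A `<=` C1 \/ A `<=` C2.

Definition SI2_open (U : set X) : Prop :=
  open U /\ forall F, irreducible F -> delta F `&` U !=set0 -> F `&` U !=set0.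

Definition directed (I : Type) (le : I -> I -> Prop) : Prop :=
  [/\ (forall i, le i i), (forall i j k, le i j -> le j k -> le i k),
      inhabited I & forall i j, exists k, le i k /\ le j k].
Definition eventually_in (I : Type) (le : I -> I -> Prop) (x : I -> X) (U : set X) :=
  exists i0, forall i, le i0 i -> U (x i).

Definition ups (F : set (set X)) : set (set X) := [set Q | exists2 G, F G & Q = up G].

Definition GSI2_conv (I : Type) (le : I -> I -> Prop) (x : I -> X) (y : X) : Prop :=
  exists F : set (set X), [/\ F `<=` finsub, PS_irreducible (ups F),
    (forall U, open U -> (exists2 G, F G & up G `<=` U) -> eventually_in le x U)
    & \bigcap_(G in F) up G `<=` up [set y]].

Definition O_GSI2 : set (set X) :=
  [set U | forall (I : Type) (le : I -> I -> Prop) (x : I -> X) (y : X),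
     directed le -> U y -> GSI2_conv le x y -> eventually_in le x U].

Definition O_GSI2_conv (I : Type) (le : I -> I -> Prop) (x : I -> X) (y : X) : Prop :=
  forall U, O_GSI2 U -> U y -> eventually_in le x U.

Definition GSI2_topological : Prop :=
  forall (I : Type) (le : I -> I -> Prop) (x : I -> X) (y : X),
    directed le -> (GSI2_conv le x y <-> O_GSI2_conv le x y).

Definition wayI2 (A : set X) (x : X) : Prop :=
  forall D, irreducible D -> delta D x -> A `&` closure D !=set0.

Definition w (x : X) : set (set X) := [set Q | exists2 F, finsub F /\ wayI2 F x & Q = up F].

Definition QI2_continuous : Prop :=
  forall x, PS_irreducible (w x) /\ up [set x] = \bigcap_(Q in w x) Q.

Definition strongly_QI2_continuous : Prop :=
  QI2_continuous /\
  forall (F : set X) (x : X), finsub F -> wayI2 F x ->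
    forall U, open U -> F `<=` U -> exists W, [/\ SI2_open W, W x & W `<=` U].
End Defs.

From mathcomp Require Import all_boot.
From mathcomp Require Import boolp classical_sets cardinality topology.
Set Implicit Arguments. Unset Strict Implicit. Unset Printing Implicit Defensive.
Local Open Scope classical_set_scope.

(* Every O_GSI2-open set is SI2-open, since the singletons of an irreducible
   set D witness GSI2-convergence to each point of D^delta.  If GSI2-convergence
   is topological, a net that runs through the O_GSI2-neighbourhoods of x,
   taking its values in a set C meeting all of them, GSI2-converges to x.  This
   yields a family F of finite sets with \bigcap_(G in F) up G <= up x such
   that every open set containing some up G, G in F, contains V `&` C for an
   O_GSI2-neighbourhood V of x.  For C = X every member of F is way below x.
   If F0 is way below x and F0 <= U with U open, some O_GSI2-neighbourhood of x
   lies in U: otherwise take C = X \ U, and Rudin's lemma gives a closed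
   irreducible D <= X \ U meeting every member of F, so that x is in D^delta
   while F0 misses D.  Hence the upsets of the sets way below x are directed in
   the upper Vietoris topology and meet in up x. *)

Section Specialization.
Variable X : topologicalType.
Implicit Types (A G U : set X) (a b c y : X).

Lemma spec_le_refl a : spec_le a a.
Proof. exact: subset_closure. Qed.

Lemma open_spec_le U a b : open U -> U a -> spec_le a b -> U b.
Proof. by move=> oU Ua /(_ U (open_nbhs_nbhs (conj oU Ua))) [c [-> ]]. Qed.

Lemma closed_spec_le (C : set X) a b : closed C -> C b -> spec_le a b -> C a.
Proof. by move=> cC Cb ab; apply: cC; apply: closureS ab => z ->. Qed.

Lemma spec_le_trans a b c : spec_le a b -> spec_le b c -> spec_le a c.
Proof. by move=> ab bc; exact: closed_spec_le (@closed_closure _ _) bc ab. Qed.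

Lemma subset_up A : A `<=` up A.
Proof. by move=> a Aa; exists a => //; exact: spec_le_refl. Qed.

Lemma up_subset_open A U : open U -> A `<=` U -> up A `<=` U.
Proof. by move=> oU AU z [a Aa az]; exact: open_spec_le oU (AU _ Aa) az. Qed.

Lemma upU A G : up (A `|` G) = up A `|` up G.
Proof.
apply/seteqP; split=> z; first by case=> a [Aa|Ga] az; [left|right]; exists a.
by case=> -[a Ha az]; exists a => //; [left|right].
Qed.

Lemma compact_up1 y : compact (up [set y]).
Proof.
move=> F FF Fy; exists y; split; first exact: subset_up.
move=> A N FA; rewrite nbhsE => -[W [oW Wy] WN].
have [z [Az [a -> yz]]] := filter_ex (filterI FA Fy).
by exists z; split => //; apply: WN; exact: open_spec_le oW Wy yz.
Qed.

Lemma compact_up_finite G : finite_set G -> compact (up G).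
Proof.
move=> /finite_seqP[s ->]; elim: s => [|a s IH].
  rewrite set_nil (_ : up set0 = set0); first exact: compact0.
  by apply/seteqP; split=> z // [].
have -> : [set` a :: s] = [set a] `|` [set` s].
  apply/seteqP; split=> z /=; rewrite inE; first by case/orP=> [/eqP|]; [left|right].
  by case=> [->|->]; rewrite ?eqxx ?orbT.
by rewrite upU; apply: compactU IH; exact: compact_up1.
Qed.

Lemma PS_up G : finsub G -> PS (up G).
Proof.
move=> [fG [g Gg]]; split; first by exists g; exact: subset_up.
split; first exact: compact_up_finite.
by move=> z [y [a Ga ay] yz]; exists a => //; exact: spec_le_trans yz.
Qed.

End Specialization.

Section UpperVietoris.
Variable X : topologicalType.
Implicit Types (A : set (set X)) (U : set X).

Definition box_filtered A := forall U1 U2, open U1 -> open U2 ->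
  (exists2 Q, A Q & Q `<=` U1) -> (exists2 Q, A Q & Q `<=` U2) ->
  exists2 Q, A Q & Q `<=` U1 `&` U2.

Lemma PS_closedCbox U : open U -> PS_closed (@PS X `\` box U).
Proof.
by move=> oU; exists (box U); split=> //; split=> [Q []//|Q bQ]; exists U; split.
Qed.

Lemma PS_irreducibleP A :
  PS_irreducible A <-> [/\ A `<=` @PS X, A !=set0 & box_filtered A].
Proof.
split=> [[AP [A0 Airr]]|[AP A0 Afilt]].
  split=> // U1 U2 o1 o2 [Q1 AQ1 Q1U] [Q2 AQ2 Q2U].
  apply: contrapT => nQ.
  have : A `<=` (@PS X `\` box U1) `|` (@PS X `\` box U2).
    move=> Q AQ; have PQ := AP _ AQ.
    have [h1|h1] := pselect (Q `<=` U1); last by left; split=> // -[].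
    have [h2|h2] := pselect (Q `<=` U2); last by right; split=> // -[].
    by exfalso; apply: nQ; exists Q => // z Qz; split; [exact: h1|exact: h2].
  case/(Airr _ _ (PS_closedCbox o1) (PS_closedCbox o2)).
  - by move=> /(_ _ AQ1) [_]; apply; split=> //; exact: AP.
  - by move=> /(_ _ AQ2) [_]; apply; split=> //; exact: AP.
split=> //; split=> // _ _ [W1 [[_ W1o] ->]] [W2 [[_ W2o] ->]] AC.
apply: contrapT => /not_orP[/existsNP[Q1 /not_implyP[AQ1 nQ1]]
                           /existsNP[Q2 /not_implyP[AQ2 nQ2]]].
have /W1o[U1 [oU1 [_ Q1U1] bU1]] : W1 Q1.
  by apply: contrapT => h; apply: nQ1; split=> //; exact: AP.
have /W2o[U2 [oU2 [_ Q2U2] bU2]] : W2 Q2.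
  by apply: contrapT => h; apply: nQ2; split=> //; exact: AP.
have [Q AQ QU] := Afilt U1 U2 oU1 oU2 (ex_intro2 _ _ Q1 AQ1 Q1U1)
  (ex_intro2 _ _ Q2 AQ2 Q2U2).
have PQ := AP _ AQ.
by case: (AC _ AQ) => -[_]; apply; [apply: bU1|apply: bU2]; split=> // z /QU[].
Qed.

End UpperVietoris.

Section Families.
Variable X : topologicalType.
Implicit Types (F : set (set X)) (D G U : set X) (y : X).

Definition ups_opens F : set (set X) :=
  [set U | open U /\ exists2 G, F G & up G `<=` U].

Lemma PS_irreducible_upsP F : F `<=` @finsub X ->
  PS_irreducible (ups F) <-> F !=set0 /\ setI_closed (ups_opens F).
Proof.
move=> Ffin; rewrite PS_irreducibleP; split=> [[_ [_ [G FG _]] Ffilt]|[[G FG] FI]].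
  split=> [|U1 U2 [o1 [G1 FG1 G1U]] [o2 [G2 FG2 G2U]]]; first by exists G.
  have [_ [G' FG' ->] GU] := Ffilt U1 U2 o1 o2
    (ex_intro2 _ _ (up G1) (ex_intro2 _ _ _ FG1 erefl) G1U)
    (ex_intro2 _ _ (up G2) (ex_intro2 _ _ _ FG2 erefl) G2U).
  by split; [exact: openI|exists G'].
split=> [_ [G' FG' ->]|| U1 U2 o1 o2 [_ [G1 FG1 ->] G1U] [_ [G2 FG2 ->] G2U]].
- exact/PS_up/Ffin.
- by exists (up G); exists G.
have [_ [G' FG' G'U]] := FI U1 U2 (conj o1 (ex_intro2 _ _ G1 FG1 G1U))
  (conj o2 (ex_intro2 _ _ G2 FG2 G2U)).
by exists (up G') => //; exists G'.
Qed.

Definition GSI2_family F y := [/\ F `<=` @finsub X, PS_irreducible (ups F)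
  & \bigcap_(G in F) up G `<=` up [set y]].

Lemma GSI2_convE (I : Type) (le : I -> I -> Prop) (x : I -> X) y :
  GSI2_conv le x y <->
  exists2 F, GSI2_family F y & forall U, ups_opens F U -> eventually_in le x U.
Proof.
split=> [[F [Ffin Firr Fev Fy]]|[F [Ffin Firr Fy] Fev]].
  by exists F => // U [oU GU]; exact: Fev.
by exists F; split=> // U oU GU; exact: Fev.
Qed.

Lemma irreducible_setI D U1 U2 : irreducible D -> open U1 -> open U2 ->
  D `&` U1 !=set0 -> D `&` U2 !=set0 -> D `&` (U1 `&` U2) !=set0.
Proof.
move=> [_ Dirr] o1 o2 [d1 [Dd1 U1d1]] [d2 [Dd2 U2d2]]; apply: contrapT => D12.
have : D `<=` ~` U1 `|` ~` U2.
  move=> z Dz; apply: contrapT => /not_orP[/contrapT U1z /contrapT U2z].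
  by apply: D12; exists z.
have [c1 c2] : closed (~` U1) /\ closed (~` U2) by rewrite !closedC.
by case/(Dirr _ _ c1 c2) => [/(_ _ Dd1)|/(_ _ Dd2)].
Qed.

Lemma irreducible_set1 y : irreducible [set y].
Proof.
split=> [|F1 F2 _ _ /(_ y erefl) [Fy|Fy]]; first by exists y.
  by left=> z ->.
by right=> z ->.
Qed.

Lemma delta_set1 y : delta [set y] y.
Proof. by move=> a; apply. Qed.

Definition singletons D : set (set X) := [set [set d] | d in D].

Lemma GSI2_family_singletons D y :
  irreducible D -> delta D y -> GSI2_family (singletons D) y.
Proof.
move=> Dirr Dy; have Dfin : singletons D `<=` @finsub X.
  by move=> _ [d _ <-]; split; [exact: finite_set1|exists d].
split=> //.
  apply/PS_irreducible_upsP => //; split.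
    by have [d Dd] := Dirr.1; exists [set d]; exists d.
  move=> U1 U2 [o1 [_ [d1 Dd1 <-] d1U]] [o2 [_ [d2 Dd2 <-] d2U]].
  have [d [Dd dU]] := irreducible_setI Dirr o1 o2
    (ex_intro _ d1 (conj Dd1 (d1U _ (subset_up erefl))))
    (ex_intro _ d2 (conj Dd2 (d2U _ (subset_up erefl)))).
  split; first exact: openI.
  by exists [set d]; [exists d|apply: up_subset_open (openI o1 o2) _ => z ->].
move=> z zD; exists y => //; apply: Dy => d Dd.
by have [_ -> ] := zD _ (ex_intro2 _ _ d Dd erefl).
Qed.

End Families.

Section BaseNet.
Variables (X : topologicalType) (B : set (set X)) (S : set X).
Hypotheses (BI : setI_closed B) (B0 : B !=set0)
  (BS : forall U, B U -> U `&` S !=set0).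

Definition base_index := {p : set X * X | [/\ B p.1, p.1 p.2 & S p.2]}.
Definition base_le (i j : base_index) := (sval j).1 `<=` (sval i).1.
Definition base_net (i : base_index) := (sval i).2.

Lemma base_index_at U : B U -> exists i : base_index, (sval i).1 = U.
Proof.
by move=> BU; have [s [Us Ss]] := BS BU; exists (exist _ (U, s) (And3 BU Us Ss)).
Qed.

Lemma base_le_directed : directed base_le.
Proof.
split=> [i|i j k ij jk||]; rewrite /base_le //; first exact: subset_trans jk ij.
  by have [U BU] := B0; have [i _] := base_index_at BU.
move=> i j; have [Bi _ _] := svalP i; have [Bj _ _] := svalP j.
have [k kij] := base_index_at (BI Bi Bj).
by exists k; rewrite /base_le kij; split=> z [].
Qed.

Lemma base_net_eventually U : B U -> eventually_in base_le base_net U.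
Proof.
move=> /base_index_at[i0 i0U]; exists i0 => j.
by have [_ jv _] := svalP j; rewrite /base_le /base_net i0U; apply.
Qed.

Lemma eventually_base_net U :
  eventually_in base_le base_net U -> exists2 V, B V & V `&` S `<=` U.
Proof.
move=> [i0 ev]; have [BV _ _] := svalP i0.
exists (sval i0).1 => // s [Vs Ss].
exact: (ev (exist _ ((sval i0).1, s) (And3 BV Vs Ss))).
Qed.

End BaseNet.

Section GSI2Topology.
Variable X : topologicalType.
Implicit Types (F : set (set X)) (S U V : set X) (y : X).

Lemma O_GSI2I : setI_closed (@O_GSI2 X).
Proof.
move=> V W OV OW I le x y dir [Vy Wy] conv.
have [i1 h1] := OV _ _ _ _ dir Vy conv; have [i2 h2] := OW _ _ _ _ dir Wy conv.
have [_ le_trans _ le_ub] := dir; have [k [i1k i2k]] := le_ub i1 i2.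
by exists k => i ki; split; [apply: h1|apply: h2]; apply: le_trans ki.
Qed.

Lemma O_GSI2T : @O_GSI2 X setT.
Proof. by move=> I le x y [_ _ [i] _] _ _; exists i. Qed.

Lemma O_GSI2_meets F y V S : GSI2_family F y -> O_GSI2 V -> V y ->
  (forall U, ups_opens F U -> U `&` S !=set0) -> V `&` S !=set0.
Proof.
move=> Fy OV Vy FS; have [Ffin Firr _] := Fy.
have [[G FG] FI] := (PS_irreducible_upsP Ffin).1 Firr.
have B0 : ups_opens F !=set0.
  by exists setT; split; [exact: openT|exists G].
have conv :
    GSI2_conv (@base_le _ (ups_opens F) S) (@base_net _ (ups_opens F) S) y.
  by apply/GSI2_convE; exists F => // U; exact: base_net_eventually.
have [W FW WSV] := eventually_base_net
  (OV _ _ _ _ (base_le_directed FI B0 FS) Vy conv).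
by have [s [Ws Ss]] := FS _ FW; exists s; split=> //; exact: WSV.
Qed.

Lemma O_GSI2_up_subset F y V : GSI2_family F y -> O_GSI2 V -> V y ->
  exists2 G, F G & up G `<=` V.
Proof.
move=> Fy OV Vy; apply: contrapT => /forall2NP nFV.
suff [z []] : V `&` ~` V !=set0 by [].
apply: O_GSI2_meets Fy OV Vy _ => U [oU [G FG GU]].
case: (nFV G) => // /nonsubset[z [Gz nVz]].
by exists z; split=> //; exact: GU.
Qed.

Lemma O_GSI2_open V : O_GSI2 V -> open V.
Proof.
move=> OV; rewrite openE => y Vy; apply: contrapT => nVy.
suff [z []] : V `&` ~` V !=set0 by [].
have Fy := GSI2_family_singletons (irreducible_set1 y) (@delta_set1 _ y).
apply: O_GSI2_meets Fy OV Vy _.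
move=> U [oU [_ [_ -> <-] yU]]; apply: nonsubset => UV; apply: nVy.
by rewrite /interior nbhsE; exists U => //; split=> //; exact/yU/subset_up.
Qed.

Lemma O_GSI2_SI2_open V : O_GSI2 V -> SI2_open V.
Proof.
move=> OV; split=> [|D Dirr [y [Dy Vy]]]; first exact: O_GSI2_open.
have [_ [d Dd <-] dV] :=
  O_GSI2_up_subset (GSI2_family_singletons Dirr Dy) OV Vy.
by exists d; split=> //; exact/dV/subset_up.
Qed.

End GSI2Topology.

Lemma finite_subset_bigcup_chain (T : eqType) (A : set T) (W : set (set T)) :
  finite_set A -> W !=set0 -> total_on W subset ->
  A `<=` \bigcup_(U in W) U -> exists2 U, W U & A `<=` U.
Proof.
move=> /finite_seqP[s ->] [U0 WU0] Wtot; elim: s => [|a s IH] sW.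
  by exists U0 => // z.
have [Ua WUa aUa] := sW a (mem_head a s).
have [Us WUs sUs] : exists2 U, W U & [set` s] `<=` U.
  by apply: IH => z zs; apply: sW; rewrite /= inE zs orbT.
have [UaUs|UsUa] := Wtot _ _ WUa WUs; [exists Us|exists Ua] => // z;
  rewrite /= inE => /orP[/eqP->|zs] //.
- exact: UaUs.
- exact: sUs.
- exact/UsUa/sUs.
Qed.

Section Rudin.
Variables (X : topologicalType) (F : set (set X)) (C : set X).
Hypotheses (Ffin : F `<=` @finsub X) (Firr : PS_irreducible (ups F))
  (cC : closed C) (FC : forall G, F G -> G `&` C !=set0).

Let avoiding (U : set X) := open U /\ forall G, F G -> ~ (G `&` C `<=` U).

Let avoiding_bigcup (W : set (set X)) : W `<=` avoiding -> total_on W subset ->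
  avoiding (\bigcup_(U in W) U).
Proof.
move=> WA Wtot; split=> [|G FG GCW]; first by apply: bigcup_open => U /WA[].
have [U WU GCU] : exists2 U, W U & G `&` C `<=` U.
  apply: (finite_subset_bigcup_chain _ _ Wtot GCW).
    exact: finite_setIl (Ffin FG).1.
  by have [g GCg] := FC FG; have [U WU _] := GCW g GCg; exists U.
by have [_ /(_ G FG)] := WA U WU.
Qed.

Lemma rudin : exists D,
  [/\ closed D, D `<=` C, irreducible D & forall G, F G -> G `&` D !=set0].
Proof.
have [U [[oU UF] Umax]] := Zorn_bigcup avoiding_bigcup.
have [[G0 FG0] FI] := (PS_irreducible_upsP Ffin).1 Firr.
have DF G : F G -> G `&` (C `\` U) !=set0.
  by move=> FG; have [z [[Gz Cz] nUz]] := nonsubset (UF G FG); exists z.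
have cD : closed (C `\` U) by apply: closedI => //; rewrite closedC.
exists (C `\` U); split=> //; split; first by have [z [_ Dz]] := DF G0 FG0; exists z.
move=> F1 F2 c1 c2 DF12; apply: contrapT => /not_orP[n1 n2].
(* By maximality of [U], an open proper enlargement of [U] contains some
   [G `&` C]. *)
have enlarge (Fi : set X) : closed Fi -> ~ (C `\` U `<=` Fi) ->
    ups_opens F (U `|` ~` (C `&` Fi)).
  move=> cFi /nonsubset[d [[Cd nUd] nFd]].
  have oW : open (U `|` ~` (C `&` Fi)).
    by apply: openU => //; rewrite openC; exact: closedI.
  have : ~ avoiding (U `|` ~` (C `&` Fi)).
    apply: Umax; split=> [z Uz|WU]; first by left.
    by apply/nUd/WU; right=> -[_ /nFd].
  case/not_andP=> [//|/existsNP[G /not_implyP[FG /contrapT GCW]]].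
  split=> //; exists G => //; apply: up_subset_open oW _ => g Gg.
  by have [Cg|nCg] := pselect (C g); [exact: GCW|right=> -[]].
have [_ [G FG GW]] := FI _ _ (enlarge F1 c1 n1) (enlarge F2 c2 n2).
have [g [Gg [Cg nUg]]] := DF G FG.
have [[//|W1g] [//|W2g]] := GW g (subset_up Gg).
by case: (DF12 g (conj Cg nUg)) => Fg; [apply: W1g|apply: W2g].
Qed.

End Rudin.

Section WayBelow.
Variable X : topologicalType.
Implicit Types (F : set (set X)) (D G U V : set X) (x : X).

Lemma wayI2_spec_le G x : wayI2 G x -> exists2 g, G g & spec_le g x.
Proof.
by move=> /(_ _ (irreducible_set1 x) (@delta_set1 _ x))[g [Gg gx]]; exists g.
Qed.

Lemma wayI2_of_SI2_nbhds G x :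
  (forall U, open U -> G `<=` U -> exists V, [/\ SI2_open V, V x & V `<=` U]) ->
  wayI2 G x.
Proof.
move=> Gnbhs D Dirr Dx; apply: contrapT => nGD.
have oU : open (~` closure D) by rewrite openC; exact: closed_closure.
have [V [[_ VSI2] Vx VU]] :=
  Gnbhs _ oU (fun g Gg clDg => nGD (ex_intro _ g (conj Gg clDg))).
have [d [Dd Vd]] := VSI2 D Dirr (ex_intro _ x (conj Dx Vx)).
exact/(VU d Vd)/subset_closure.
Qed.

Lemma delta_of_family F D x : \bigcap_(G in F) up G `<=` up [set x] ->
  (forall G, F G -> G `&` D !=set0) -> delta D x.
Proof.
move=> Fx FD z zD; have [_ -> //] : up [set x] z.
by apply: Fx => G /FD[g [Gg Dg]]; exists g => //; exact: zD.
Qed.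

Hypothesis GSI2_top : GSI2_topological X.

Lemma adherent_GSI2_family x (C : set X) :
  (forall V, O_GSI2 V -> V x -> V `&` C !=set0) ->
  exists2 F, GSI2_family F x &
    forall U, ups_opens F U -> exists V, [/\ O_GSI2 V, V x & V `&` C `<=` U].
Proof.
pose B := [set V | O_GSI2 V /\ V x]; move=> BC.
have BI : setI_closed B.
  by move=> V W [OV Vx] [OW Wx]; split; [exact: O_GSI2I|].
have B0 : B !=set0 by exists setT; split; [exact: O_GSI2T|].
have BC' U : B U -> U `&` C !=set0 by move=> [OU Ux]; exact: BC.
have dir := base_le_directed BI B0 BC'.
have /(GSI2_top _ _ dir)/GSI2_convE[F Fx Fev] :
    O_GSI2_conv (@base_le _ B C) (@base_net _ B C) x.
  by move=> U OU Ux; exact: base_net_eventually.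
exists F => // U /Fev/eventually_base_net[V [OV Vx] VCU].
by exists V.
Qed.

Lemma GSI2_family_wayI2 x :
  exists2 F, GSI2_family F x & forall G, F G -> wayI2 G x.
Proof.
have [|F Fx FV] := @adherent_GSI2_family x setT.
  by move=> V _ Vx; exists x.
exists F => // G FG; apply: wayI2_of_SI2_nbhds => U oU GU.
have [V [OV Vx VU]] :=
  FV U (conj oU (ex_intro2 _ _ G FG (up_subset_open oU GU))).
by exists V; split=> //; [exact: O_GSI2_SI2_open|move=> z Vz; exact: VU].
Qed.

Lemma wayI2_O_GSI2_nbhd G x U : wayI2 G x -> open U -> G `<=` U ->
  exists V, [/\ O_GSI2 V, V x & V `<=` U].
Proof.
move=> Gx oU GU; apply: contrapT => nV.
have meetsC V : O_GSI2 V -> V x -> V `&` ~` U !=set0.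
  by move=> OV Vx; apply: nonsubset => VU; apply: nV; exists V.
have [F [Ffin Firr Fx] FV] := adherent_GSI2_family meetsC.
have FC G' : F G' -> G' `&` ~` U !=set0.
  move=> FG'; apply: nonsubset => G'U.
  have [V [OV Vx VCU]] :=
    FV U (conj oU (ex_intro2 _ _ G' FG' (up_subset_open oU G'U))).
  by have [z [Vz nUz]] := meetsC V OV Vx; exact/nUz/VCU.
have cU : closed (~` U) by rewrite closedC.
have [D [cD DC Dirr FD]] := rudin Ffin Firr cU FC.
have [g [Gg clDg]] := Gx D Dirr (delta_of_family Fx FD).
exact: DC g (cD g clDg) (GU g Gg).
Qed.

Lemma w_PS_irreducible x : PS_irreducible (w x).
Proof.
have [F [Ffin Firr Fx] Fway] := GSI2_family_wayI2 x.
have wF G : F G -> finsub G /\ wayI2 G x.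
  by move=> FG; split; [exact: Ffin|exact: Fway].
change (PS_irreducible (ups [set G | finsub G /\ wayI2 G x])).
apply/PS_irreducible_upsP => [G []//|]; split.
  by have [[G FG] _] := (PS_irreducible_upsP Ffin).1 Firr; exists G; exact: wF.
move=> U1 U2 [o1 [G1 [_ G1x] G1U]] [o2 [G2 [_ G2x] G2U]].
split; first exact: openI.
have [V1 [OV1 V1x V1U]] :=
  wayI2_O_GSI2_nbhd G1x o1 (subset_trans (@subset_up _ G1) G1U).
have [V2 [OV2 V2x V2U]] :=
  wayI2_O_GSI2_nbhd G2x o2 (subset_trans (@subset_up _ G2) G2U).
have [G FG GV] :=
  O_GSI2_up_subset (And3 Ffin Firr Fx) (O_GSI2I OV1 OV2) (conj V1x V2x).
by exists G; [exact: wF|move=> z /GV[/V1U ? /V2U ?]].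
Qed.

Lemma up1_bigcap_w x : up [set x] = \bigcap_(Q in w x) Q.
Proof.
have [F [Ffin _ Fx] Fway] := GSI2_family_wayI2 x.
apply/seteqP; split=> [z [_ -> xz] _ [G [_ /wayI2_spec_le[g Gg gx]] ->]|z zw].
  by exists g => //; exact: spec_le_trans xz.
by apply: Fx => G FG; apply: zw; exists G => //; split; [exact: Ffin|exact: Fway].
Qed.

End WayBelow.

Theorem proposition4p10 (X : topologicalType) :
  kolmogorov_space X -> GSI2_topological X -> strongly_QI2_continuous X.
Proof.
move=> _ GSI2_top; split=> [x|F x _ Fx U oU FU].
  by split; [exact: w_PS_irreducible|exact: up1_bigcap_w].
have [V [OV Vx VU]] := wayI2_O_GSI2_nbhd GSI2_top Fx oU FU.
by exists V; split=> //; exact: O_GSI2_SI2_open.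
Qed.
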